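(* Let $L\ge2$, $k\ge2$ be integers, $\kappa:\{1,\dots,k-1\}\times\mathbb{N}\to\{0,\dots,L-1\}$ a map, and $(a(n))_{n=0}^\infty$ an $(L,k,\kappa)$-TM sequence. Then the $(L,k,\kappa)$-TM sequence is $n$-period if and only if $(a(n))_{n=0}^\infty$ is a $k$-automatic sequence.
   Context: $\mathbb{N}$ is the set of non-negative integers. Let $a_0,\dots,a_{L-1}$ be pairwise distinct complex numbers and $f$ the map on $\{a_0,\dots,a_{L-1}\}$ with $f(a_i)=a_{i+1}$ (indices mod $L$), extended letterwise to words, with iterates $f^j$, $f^0=\mathrm{id}$. Define $A_0=a_0$, $A_{n+1}=A_n\,f^{\kappa(1,n)}(A_n)\cdots f^{\kappa(k-1,n)}(A_n)$ (concatenation); the limit infinite word, indexed from $0$, is the $(L,k,\kappa)$-TM sequence. It is called $n$-period if there exist integers $N\ge0$ and $t>0$ with $\kappa(s,n)=\kappa(s,n+t)$ for all $1\le s\le k-1$ and all $n\ge N$. The $k$-kernel of a sequence $(a(n))$ is the set of subsequences $(a(k^en+j))_{n=0}^\infty$ with $e\ge0$, $0\le j\le k^e-1$; the sequence is $k$-automatic if its $k$-kernel is finite. *)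

From mathcomp Require Import all_boot all_algebra.
From mathcomp Require Import all_classical all_reals.
From mathcomp Require Export complex.

Unset Implicit Arguments.
Unset Strict Implicit.
Unset Printing Implicit Defensive.

Local Open Scope classical_set_scope.

(* Words are represented by the sequence of indices i of their letters a_i
   (0 <= i < L). The letter map f(a_i) = a_{i+1 mod L} becomes i |-> (i+1) %% L,
   so f^j acts letterwise as i |-> (i + j) %% L. *)
Definition fpow (L j : nat) (w : seq nat) : seq nat :=
  [seq (i + j) %% L | i <- w].

Fixpoint TMword (L k : nat) (kappa : nat -> nat -> 'I_L) (n : nat) : seq nat :=
  match n with
  | 0 => [:: 0]
  | n'.+1 =>
      let A := TMword L k kappa n' in
      A ++ flatten [seq fpow L (kappa s n') A | s <- iota 1 k.-1]
  end.

(* The limit infinite word: A_n is a prefix of A_{n+1} and |A_n| = k^n, so the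
   m-th letter of the limit is the m-th letter of A_{m+1} (|A_{m+1}| > m). *)
Definition TMseq (R : realType) (L k : nat) (a : nat -> R[i])
  (kappa : nat -> nat -> 'I_L) (m : nat) : R[i] :=
  a (nth 0 (TMword L k kappa m.+1) m).

Definition n_period (L k : nat) (kappa : nat -> nat -> 'I_L) : Prop :=
  exists N t : nat, 0 < t /\
    forall s n, 1 <= s <= k.-1 -> N <= n -> kappa s n = kappa s (n + t).

Definition k_kernel (T : Type) (k : nat) (u : nat -> T) : set (nat -> T) :=
  [set g | exists e j : nat, j <= k ^ e - 1 /\ g = (fun n => u (k ^ e * n + j))].

Definition k_automatic (T : Type) (k : nat) (u : nat -> T) : Prop :=
  finite_set (k_kernel T k u).

From mathcomp Require Import all_boot all_algebra.
From mathcomp Require Import all_classical all_reals.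
From mathcomp Require Import complex.
From mathcomp Require Import zify.

Local Open Scope classical_set_scope.

(* Letter m of the TM word is a_(sigma(m) mod L), where sigma(m) is the sum over
   the base-k digits d_i of m of kappa(d_i, i), with kappa(0, .) = 0.  Hence the
   kernel element n |-> a(k^e n + j) only depends on sigma_e(j) mod L and on the
   shifted map kappa(., e + .).  If kappa is eventually periodic, e can be
   folded below N + t, leaving finitely many kernel elements.  Conversely, if
   the kernel is finite, two elements n |-> a(k^e1 n) and n |-> a(k^e2 n) with
   e1 < e2 coincide; evaluated at n = s k^i they give, by injectivity of a,
   kappa(s, e1 + i) = kappa(s, e2 + i). *)

Definition digit (k i m : nat) := (m %/ k ^ i) %% k.

(* The zero digit contributes no shift: the first block of A_(n+1) is A_n. *)
Definition kappa0 L (kappa : nat -> nat -> 'I_L) (s e : nat) : nat :=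
  if s == 0 then 0 else kappa s e.

(* The level offset b is needed to describe kernel subsequences. *)
Definition tm_shift L k (kappa : nat -> nat -> 'I_L) (n b m : nat) : nat :=
  \sum_(i < n) kappa0 L kappa (digit k i m) (b + i).

Lemma digit_expnMD k e i m j : 0 < k -> j < k ^ e ->
  digit k i (k ^ e * m + j) = if i < e then digit k i j else digit k (i - e) m.
Proof.
move=> k_gt0 lt_j; rewrite /digit; case: ltnP => lt_ie.
  have -> : k ^ e = k ^ (e - i - 1) * k * k ^ i.
    by rewrite -expnSr -expnD; congr (_ ^ _); lia.
  rewrite -mulnA (mulnC (k ^ i)) mulnA divnMDl ?expn_gt0 ?k_gt0 //.
  by rewrite mulnAC modnMDl.
have -> : k ^ i = k ^ e * k ^ (i - e) by rewrite -expnD; congr (_ ^ _); lia.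
by rewrite divnMA mulnC divnMDl ?expn_gt0 ?k_gt0 // (divn_small lt_j) addn0.
Qed.

Lemma size_flatten_iota (T : Type) (F : nat -> seq T) z b c :
  (forall s, size (F s) = z) -> size (flatten [seq F s | s <- iota b c]) = c * z.
Proof.
move=> sizeF; elim: c b => [|c IHc] b //=.
by rewrite size_cat IHc sizeF mulSn.
Qed.

Lemma nth_flatten_iota (T : Type) (x0 : T) (F : nat -> seq T) z b c q r :
  (forall s, size (F s) = z) -> q < c -> r < z ->
  nth x0 (flatten [seq F s | s <- iota b c]) (q * z + r) = nth x0 (F (b + q)) r.
Proof.
move=> sizeF; elim: c b q => [|c IHc] b [|q] //= lt_qc lt_rz.
  by rewrite nth_cat sizeF mul0n add0n lt_rz addn0.
rewrite nth_cat sizeF mulSn -addnA ltnNge leq_addr /= addKn IHc //.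
by rewrite addSnnS.
Qed.

Section TMShift.

Variables (L k : nat) (kappa : nat -> nat -> 'I_L).
Hypothesis k_gt0 : 0 < k.

Local Notation shift := (tm_shift L k kappa).
Local Notation A := (TMword L k kappa).

Lemma tm_shift_expnMD e M b m j : j < k ^ e ->
  shift (e + M) b (k ^ e * m + j) = shift e b j + shift M (b + e) m.
Proof.
move=> lt_j; rewrite /tm_shift big_split_ord /=; congr addn.
  by apply: eq_bigr => i _; rewrite digit_expnMD // ltn_ord.
apply: eq_bigr => i _; rewrite digit_expnMD //= ltnNge leq_addr /= addnA.
by congr kappa0; congr digit; lia.
Qed.

Lemma tm_shift0 M b : shift M b 0 = 0.
Proof. by rewrite /tm_shift big1 // => i _; rewrite /digit div0n mod0n. Qed.

Lemma tm_shift_widen b m n1 n2 : m < k ^ n1 -> m < k ^ n2 ->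
  shift n1 b m = shift n2 b m.
Proof.
wlog le_n12 : n1 n2 / n1 <= n2.
  move=> wlog_le lt1 lt2; case: (leqP n1 n2) => [|/ltnW] le; first exact: wlog_le.
  by symmetry; apply: wlog_le.
move=> lt1 _; have := tm_shift_expnMD n1 (n2 - n1) b 0 m lt1.
by rewrite muln0 add0n tm_shift0 addn0 subnKC.
Qed.

Lemma tm_shift_single_digit e i s : 1 < k -> 0 < s < k ->
  shift (k ^ i * s).+1 e (k ^ i * s) = kappa s (e + i).
Proof.
move=> k_gt1 /andP[s_gt0 lt_sk].
have lt_n : k ^ i * s < k ^ (k ^ i * s).+1.
  by apply: ltn_trans (ltn_expl _ k_gt1); apply: ltnSn.
rewrite (tm_shift_widen _ _ _ (i + 1) lt_n); last first.
  by rewrite expnD expn1 ltn_pmul2l ?expn_gt0 ?k_gt0.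
rewrite -[k ^ i * s]addn0 tm_shift_expnMD ?expn_gt0 ?k_gt0 // tm_shift0 add0n.
rewrite /tm_shift big_ord1 /digit expn0 divn1 modn_small // /kappa0 addn0.
by rewrite eqn0Ngt s_gt0.
Qed.

Lemma size_TMword n : size (A n) = k ^ n.
Proof.
elim: n => //= n IHn.
rewrite size_cat (size_flatten_iota _ _ (k ^ n)) => [|s]; last by rewrite size_map.
by rewrite IHn expnS -mulSn prednK.
Qed.

Lemma nth_TMword n m : m < k ^ n -> nth 0 (A n) m = shift n 0 m %% L.
Proof.
elim: n m => [|n IHn] m lt_m.
  by case: m lt_m => [|m] //= _; rewrite tm_shift0 mod0n.
have kn_gt0 : 0 < k ^ n by rewrite expn_gt0 k_gt0.
rewrite /= nth_cat size_TMword; case: ltnP => [lt_mn|le_nm].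
  by rewrite IHn // (tm_shift_widen _ _ n n.+1) // ltn_expl.
have sizeF s : size (fpow L (kappa s n) (A n)) = k ^ n by rewrite size_map size_TMword.
set m' := m - k ^ n; set q := m' %/ k ^ n; set r := m' %% k ^ n.
have lt_r : r < k ^ n by rewrite ltn_pmod.
have lt_q : q < k.-1.
  rewrite ltn_divLR //; move: lt_m le_nm.
  rewrite /m' expnS -{1}(prednK k_gt0) mulSn; lia.
have def_m : m = k ^ n * q.+1 + r.
  by rewrite mulnS -addnA (mulnC (k ^ n) q) -divn_eq subnKC.
rewrite (divn_eq m' (k ^ n)) -/q -/r (nth_flatten_iota _ _ _ _ _ _ _ _ sizeF) //.
rewrite (nth_map 0) ?size_TMword // IHn // modnDml def_m -[n.+1]addn1.
rewrite tm_shift_expnMD // add0n /tm_shift big_ord1 /digit expn0 divn1.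
rewrite (@modn_small q.+1 k); last by rewrite -(prednK k_gt0) ltnS.
by rewrite /kappa0 addn0 add1n.
Qed.

Variables (R : realType) (a : nat -> R[i]).
Hypothesis k_gt1 : 1 < k.

Local Notation u := (TMseq R L k a kappa).

Lemma TMseqE m : u m = a (shift m.+1 0 m %% L).
Proof.
by rewrite /TMseq nth_TMword //; apply: ltn_trans (ltn_expl _ k_gt1); apply: ltnSn.
Qed.

Lemma TMseq_expnMD e n j : j < k ^ e ->
  u (k ^ e * n + j) = a ((shift e 0 j + shift n.+1 e n) %% L).
Proof.
move=> lt_j; rewrite TMseqE (tm_shift_widen _ _ _ (e + n.+1)).
- by rewrite tm_shift_expnMD.
- by apply: ltn_trans (ltn_expl _ k_gt1); apply: ltnSn.
have := ltn_expl n.+1 k_gt1; rewrite expnD; nia.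
Qed.

Lemma TMseq_expn_digit e i s : 0 < s < k ->
  u (k ^ e * (k ^ i * s) + 0) = a (kappa s (e + i)).
Proof.
move=> s_digit; rewrite TMseq_expnMD ?expn_gt0 ?k_gt0 // tm_shift0 add0n.
by rewrite tm_shift_single_digit // modn_small.
Qed.

End TMShift.

Definition fold_level (N t e : nat) : nat :=
  if e < N then e else N + (e - N) %% t.

Lemma fold_level_lt N t e : 0 < t -> fold_level N t e < N + t.
Proof.
move=> t_gt0; rewrite /fold_level; case: (ltnP e N) => [lt_eN|_]; first lia.
by rewrite ltn_add2l ltn_pmod.
Qed.

Section EventuallyPeriodic.

Variables (L k N t : nat) (kappa : nat -> nat -> 'I_L).
Hypothesis t_gt0 : 0 < t.
Hypothesis kappa_per :
  forall s n, 1 <= s <= k.-1 -> N <= n -> kappa s n = kappa s (n + t).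

Lemma kappa_perM s c n : 1 <= s <= k.-1 -> N <= n ->
  kappa s n = kappa s (n + c * t).
Proof.
move=> s_digit; elim: c n => [|c IHc] n le_Nn; first by rewrite addn0.
rewrite IHc // kappa_per ?mulSnr ?addnA //.
exact: leq_trans le_Nn (leq_addr _ _).
Qed.

Lemma kappa0_fold_level s e i : s < k ->
  kappa0 L kappa s (e + i) = kappa0 L kappa s (fold_level N t e + i).
Proof.
move=> lt_sk; rewrite /kappa0 /fold_level.
case: eqP => // /eqP s_neq0; case: (ltnP e N) => // le_Ne.
rewrite (kappa_perM s ((e - N) %/ t) (N + (e - N) %% t + i)); first last.
- lia.
- by rewrite lt0n s_neq0 /=; lia.
congr (nat_of_ord (kappa _ _)); have := divn_eq (e - N) t; lia.
Qed.

Lemma tm_shift_fold_level M e n : 0 < k ->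
  tm_shift L k kappa M e n = tm_shift L k kappa M (fold_level N t e) n.
Proof.
move=> k_gt0; apply: eq_bigr => i _.
by rewrite kappa0_fold_level // ltn_pmod.
Qed.

End EventuallyPeriodic.

Lemma n_period_k_automatic (R : realType) L k (a : nat -> R[i])
    (kappa : nat -> nat -> 'I_L) :
  0 < L -> 2 <= k ->
  n_period L k kappa -> k_automatic R[i] k (TMseq R L k a kappa).
Proof.
move=> L_gt0 k_gt1 [N [t [t_gt0 kappa_per]]]; have k_gt0 : 0 < k by lia.
pose kernel_elt c e := fun n => a ((c + tm_shift L k kappa n.+1 e n) %% L).
apply: (@sub_finite_set _ _ [set kernel_elt c e | c in `I_L & e in `I_(N + t)]);
  last exact/finite_image2/finite_II.
move=> _ [e [j [le_j ->]]].
have lt_j : j < k ^ e by move: le_j (expn_gt0 k e); rewrite k_gt0; lia.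
exists (tm_shift L k kappa e 0 j %% L); first by rewrite /= ltn_pmod.
exists (fold_level N t e); first exact: fold_level_lt.
apply/funext => n; rewrite TMseq_expnMD // /kernel_elt modnDml.
by rewrite (tm_shift_fold_level _ _ _ _ _ t_gt0 kappa_per n.+1 e).
Qed.

Lemma finite_set_collision (T : Type) (A : set T) (f : nat -> T) :
  finite_set A -> (forall e, A (f e)) -> exists e1 e2, e1 < e2 /\ f e1 = f e2.
Proof.
move=> finA Af; apply: contrapT => no_collision; apply: infinite_nat.
have -> : [set: nat] = f @^-1` A by apply/seteqP; split=> e // _; apply: Af.
apply: finite_preimage finA => e1 e2 _ _ eq_f.
by case: (ltngtP e1 e2) => // lt_e; case: no_collision; [exists e1, e2 | exists e2, e1].
Qed.

Lemma k_automatic_n_period (R : realType) L k (a : nat -> R[i])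
    (kappa : nat -> nat -> 'I_L) :
  2 <= k -> {in [pred i | i < L] &, injective a} ->
  k_automatic R[i] k (TMseq R L k a kappa) -> n_period L k kappa.
Proof.
move=> k_gt1 a_inj kernel_fin; have k_gt0 : 0 < k by lia.
pose u_expn e := fun n => TMseq R L k a kappa (k ^ e * n + 0).
have [e1 [e2 [lt_e12 eq_u]]] : exists e1 e2, e1 < e2 /\ u_expn e1 = u_expn e2.
  by apply: finite_set_collision kernel_fin _ => e; exists e, 0.
exists e1, (e2 - e1); split=> [|s n s_digit le_e1n]; first lia.
have lt_sk : 0 < s < k by move: s_digit; rewrite -(prednK k_gt0); lia.
have := congr1 (fun g => g (k ^ (n - e1) * s)) eq_u; rewrite /u_expn.
rewrite !TMseq_expn_digit // => /a_inj; rewrite !inE !ltn_ord => /(_ isT isT).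
move/val_inj; rewrite subnKC // => ->; congr (kappa s _); lia.
Qed.

Theorem proposition5p1 (R : realType) (L k : nat) (a : nat -> R[i])
  (kappa : nat -> nat -> 'I_L) :
  2 <= L -> 2 <= k ->
  {in [pred i | i < L] &, injective a} ->
  n_period L k kappa <-> k_automatic (R[i]) k (TMseq R L k a kappa).
Proof.
move=> L_gt1 k_gt1 a_inj; split.
- by apply: n_period_k_automatic => //; apply: ltnW.
- exact: k_automatic_n_period.
Qed.
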